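(* Let $F$ be the elementary cellular automaton with rule number 44. For every nonempty finite word $u\in\{0,1\}^*$, the deterministic communication complexity of $\textsc{SInv}_{F,u}$ restricted to inputs of length $n$ is bounded by a constant independent of $n$.
   Context: An elementary cellular automaton (ECA) with rule number $N\in\{0,\dots,255\}$ is the map $F:\{0,1\}^{\mathbb Z}\to\{0,1\}^{\mathbb Z}$ given by $F(x)_i=f(x_{i-1},x_i,x_{i+1})$. Here the local rule $f:\{0,1\}^3\to\{0,1\}$ is determined by $N=\sum_{a,b,c\in\{0,1\}}2^{4a+2b+c}f(a,b,c)$. For a nonempty finite word $u$, $p_u\in\{0,1\}^{\mathbb Z}$ is defined by $(p_u)_i=u_{i\bmod |u|}$. For a finite word $x$, $p_u[x]$ is the configuration equal to $x$ on positions $0,\dots,|x|-1$ and to $p_u$ elsewhere. $\textsc{SInv}_{F,u}$ is the decision problem: on input a finite word $x$, decide whether there is an integer $w$ such that for all $t\ge0$ the set of positions where $F^t(p_u)$ and $F^t(p_u[x])$ differ is contained in an interval of length $w$. For each $n$, it is regarded as a function $\{0,1\}^n\to\{0,1\}$. For a function $g:X\times Y\to Z$, $D(g)$ is the minimal depth of a deterministic two-party protocol computing $g$. In such a protocol, Alice knows $x$ and Bob knows $y$. The protocol is a binary tree: each internal node is labelled by a function of Alice's input only or of Bob's input only, with values in $\{\text{left},\text{right}\}$, and each leaf is labelled by an output value. For $g:\{0,1\}^m\to Z$, set $D(g)=\max_{0\le i<m}D(g_i)$, where $g_i:\{0,1\}^i\times\{0,1\}^{m-i}\to Z$ is $g_i(x,y)=g(xy)$.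 *)

From Stdlib Require Import ZArith.
From mathcomp Require Import all_boot.
Set Implicit Arguments. Unset Strict Implicit. Unset Printing Implicit Defensive.

Definition config := Z -> bool.

Definition local_rule (N : Z) (a b c : bool) : bool :=
  Z.testbit N (4 * Z.b2z a + 2 * Z.b2z b + Z.b2z c).

Definition eca (N : Z) (x : config) : config :=
  fun i => local_rule N (x (i - 1)%Z) (x i) (x (i + 1)%Z).

Definition periodic (u : seq bool) : config :=
  fun i => nth false u (Z.to_nat (Z.modulo i (Z.of_nat (size u)))).

Definition patch (u x : seq bool) : config :=
  fun i => if ((0 <=? i) && (i <? Z.of_nat (size x)))%Z
           then nth false x (Z.to_nat i) else periodic u i.

Definition SInv (N : Z) (u x : seq bool) : Prop :=
  exists w : Z, forall t : nat, exists a : Z, forall i : Z,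
    iter t (eca N) (periodic u) i <> iter t (eca N) (patch u x) i ->
    (a <= i /\ i < a + w)%Z.

Inductive protocol (X Y : Type) : Type :=
| Leaf : bool -> protocol X Y
| AliceNode : (X -> bool) -> protocol X Y -> protocol X Y -> protocol X Y
| BobNode : (Y -> bool) -> protocol X Y -> protocol X Y -> protocol X Y.

Fixpoint run (X Y : Type) (p : protocol X Y) (x : X) (y : Y) : bool :=
  match p with
  | Leaf b => b
  | AliceNode f l r => if f x then run l x y else run r x y
  | BobNode g l r => if g y then run l x y else run r x y
  end.

Fixpoint depth (X Y : Type) (p : protocol X Y) : nat :=
  match p with
  | Leaf _ => 0
  | AliceNode _ l r => (maxn (depth l) (depth r)).+1
  | BobNode _ l r => (maxn (depth l) (depth r)).+1
  end.

Definition computes (X Y : Type) (p : protocol X Y) (P : X -> Y -> Prop) : Prop :=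
  forall x y, run p x y = true <-> P x y.

Definition CC_le (X Y : Type) (P : X -> Y -> Prop) (C : nat) : Prop :=
  exists p : protocol X Y, depth p <= C /\ computes p P.

(* D(SInv_{F,u} on {0,1}^n) <= C : for every split point 0 <= i < n,
   the function g_i(x,y) = SInv(xy) on {0,1}^i x {0,1}^(n-i) has D(g_i) <= C. *)
Definition SInv_CC_le (N : Z) (u : seq bool) (n C : nat) : Prop :=
  forall i : nat, i < n ->
    CC_le (fun (x : i.-tuple bool) (y : (n - i).-tuple bool) =>
             SInv N u (tval x ++ tval y)) C.

From Stdlib Require Import ZArith.
From mathcomp Require Import all_boot.
From Stdlib Require Import Lia Classical.
From mathcomp Require Import zify.

Set Implicit Arguments.
Unset Strict Implicit.
Unset Printing Implicit Defensive.

(** Rule 44 sets a cell to 1 exactly on the neighbourhoods 010, 011 and 101.  A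
    pair 00 is a wall: it is never destroyed, so no information crosses it.  The
    configurations all of whose windows are 110, 101 or 011 are the shifts of
    (110)^Z, on which rule 44 is the left shift; any other configuration creates a
    wall within two steps.

    If p_u is not such a shift, it acquires walls repeating with period |u|, and a
    pair of them encloses any finite perturbation forever: SInv holds for every x.
    If p_u is such a shift, the rightmost difference between p_u and p_u[x] moves
    right at speed one forever.  If p_u[x] is not such a shift, it acquires a wall
    that stays put, while p_u never contains one, so the differences spread over
    unboundedly long intervals; if it is, it equals p_u, since a tiling is
    determined by any right half of it.  So SInv holds iff x is the prefix of p_u,
    which Alice and Bob check on their halves separately. *)

Local Open Scope Z_scope.

Lemma Z_rightmost (P : pred Z) k M : P k -> (forall i, M <= i -> ~~ P i) ->
  exists r, P r /\ forall i, r < i -> ~~ P i.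
Proof.
move=> Pk PM; have [m] : exists m : nat, M - k <= Z.of_nat m by exists (Z.to_nat (M - k)); lia.
elim: m k Pk => [|m IH] k Pk km.
  by move: (PM k ltac:(lia)); rewrite Pk.
have [[i [ki Pi]] | none] := classic (exists i, k < i /\ P i).
  have iM : i < M by apply/Z.nle_gt => Mi; move: (PM i Mi); rewrite Pi.
  by apply: (IH i Pi); lia.
by exists k; split=> // i ki; apply/negP => Pi; apply: none; exists i.
Qed.

Lemma iter_eca_local N t (c d : config) i :
  (forall j, i - Z.of_nat t <= j <= i + Z.of_nat t -> c j = d j) ->
  iter t (eca N) c i = iter t (eca N) d i.
Proof.
elim: t i => [|t IH] i H /=; first by apply: H; lia.
rewrite /eca (IH (i - 1)) ?(IH i) ?(IH (i + 1)) // => j hj; apply: H; lia.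
Qed.

Definition has_period (P : Z) (c : config) := forall i k, c (i + k * P) = c i.

Lemma periodic_has_period u : u <> [::] -> has_period (Z.of_nat (size u)) (periodic u).
Proof. by case: u => // b u _ i k; rewrite /periodic Z.mod_add. Qed.

Lemma iter_eca_has_period N P t c : has_period P c -> has_period P (iter t (eca N) c).
Proof.
move=> Pc; elim: t => [|t IH] //= i k; rewrite /eca.
have -> : i + k * P - 1 = i - 1 + k * P by lia.
have -> : i + k * P + 1 = i + 1 + k * P by lia.
by rewrite !IH.
Qed.

Lemma patch_out u x j : j < 0 \/ Z.of_nat (size x) <= j -> patch u x j = periodic u j.
Proof.
rewrite /patch => hj; case: ifP => // /andP[/Z.leb_le ? /Z.ltb_lt ?]; lia.
Qed.

Lemma iter_eca_patch_out N u x t i :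
  i + Z.of_nat t < 0 \/ Z.of_nat (size x) <= i - Z.of_nat t ->
  iter t (eca N) (patch u x) i = iter t (eca N) (periodic u) i.
Proof. by move=> hi; apply: iter_eca_local => j hj; apply: patch_out; lia. Qed.

Definition periodic_window u s n := mkseq (fun k => periodic u (Z.of_nat (s + k))) n.

Lemma periodic_windowD u s m n :
  periodic_window u s (m + n) = periodic_window u s m ++ periodic_window u (s + m) n.
Proof.
rewrite /periodic_window /mkseq iotaD map_cat add0n -[in iota m n](addn0 m) iotaDl -map_comp.
by congr (_ ++ _); apply: eq_map => k /=; rewrite addnA.
Qed.

Lemma patch_eq_periodicP u x :
  (forall i, patch u x i = periodic u i) <-> x = periodic_window u 0 (size x).
Proof.
split=> [E | xE i].
  apply: (@eq_from_nth _ false); rewrite ?size_mkseq // => k kx.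
  rewrite nth_mkseq // add0n -E /patch ifT ?Nat2Z.id //.
  by apply/andP; split; [apply/Z.leb_le | apply/Z.ltb_lt]; lia.
rewrite /patch; case: ifP => // /andP[/Z.leb_le i0 /Z.ltb_lt ix].
by rewrite xE nth_mkseq ?add0n ?Z2Nat.id //; lia.
Qed.

Lemma SInv_of_patch_eq N u x : (forall i, patch u x i = periodic u i) -> SInv N u x.
Proof.
by move=> E; exists 0 => t; exists 0 => i []; apply: iter_eca_local => j _; rewrite E.
Qed.

Definition rule44 (a b c : bool) := (b && ~~ a) || [&& a, ~~ b & c].

Local Notation F := (eca 44).

Lemma eca44E (c : config) i : F c i = rule44 (c (i - 1)) (c i) (c (i + 1)).
Proof. by rewrite /eca /rule44; case: (c (i - 1)); case: (c i); case: (c (i + 1)). Qed.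

Lemma eca44_at (c : config) i l r : l = i - 1 -> r = i + 1 ->
  F c i = rule44 (c l) (c i) (c r).
Proof. by move=> -> ->; apply: eca44E. Qed.

Definition wall (c : config) j := ~~ c j && ~~ c (j + 1).

Lemma wall_eca c j : wall c j -> wall (F c) j.
Proof.
case/andP => /negbTE c0 /negbTE c1.
rewrite /wall eca44E (@eca44_at _ (j + 1) j (j + 2)); try lia.
by rewrite c0 c1 /rule44 !andbF.
Qed.

Lemma wall_iter c j s t : (s <= t)%N -> wall (iter s F c) j -> wall (iter t F c) j.
Proof.
move/subnK <-; elim: (t - s)%N => [|m IH] // w.
by rewrite addSn /=; apply/wall_eca/IH.
Qed.

Definition tile110 (a b c : bool) :=
  [|| [&& a, b & ~~ c], [&& a, ~~ b & c] | [&& ~~ a, b & c]].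

Definition tiled (c : config) := forall i, tile110 (c i) (c (i + 1)) (c (i + 2)).

Lemma tiled_eca_shift c : tiled c -> forall i, F c i = c (i + 1).
Proof.
move=> Tc i; rewrite eca44E; have := Tc (i - 1).
have -> : i - 1 + 1 = i by lia.
have -> : i - 1 + 2 = i + 1 by lia.
by rewrite /tile110 /rule44; case: (c (i - 1)); case: (c i); case: (c (i + 1)).
Qed.

Lemma tiled_iter t c : tiled c -> tiled (iter t F c).
Proof.
move=> Tc; elim: t => [|t IH] //= i; rewrite !tiled_eca_shift //.
have := IH (i + 1).
have -> : i + 1 + 1 = i + 2 by lia.
by have -> : i + 1 + 2 = i + 2 + 1 by lia.
Qed.

Lemma tiled_no_wall c j : tiled c -> ~~ wall c j.
Proof. by move=> /(_ j); rewrite /wall /tile110; case: (c j); case: (c (j + 1)). Qed.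

Lemma tile110_uniq_left a a' b c : tile110 a b c -> tile110 a' b c -> a = a'.
Proof. by case: a; case: a'; case: b; case: c. Qed.

Lemma tiled_eq_right (c d : config) n : tiled c -> tiled d ->
  (forall i, n <= i -> c i = d i) -> forall i, c i = d i.
Proof.
move=> Tc Td A i; have [m] : exists m : nat, n - i <= Z.of_nat m by exists (Z.to_nat (n - i)); lia.
elim: m i => [|m IH] i im; first by apply: A; lia.
apply: tile110_uniq_left (Tc i) _.
by rewrite (IH (i + 1)) ?(IH (i + 2)) ?Td //; lia.
Qed.

Lemma not_tile110_wall c i : ~~ tile110 (c i) (c (i + 1)) (c (i + 2)) ->
  exists t j, wall (iter t F c) j.
Proof.
have s1 : i + 1 + 1 = i + 2 by lia.
have s2 : i + 2 + 1 = i + 3 by lia.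
have s3 : i - 1 + 1 = i by lia.
have e0 : F c i = rule44 (c (i - 1)) (c i) (c (i + 1)) by apply: eca44E.
have e1 : F c (i + 1) = rule44 (c i) (c (i + 1)) (c (i + 2)) by apply: eca44_at; lia.
have e2 : F c (i + 2) = rule44 (c (i + 1)) (c (i + 2)) (c (i + 3)) by apply: eca44_at; lia.
have f1 : F (F c) (i + 1) = rule44 (F c i) (F c (i + 1)) (F c (i + 2)) by apply: eca44_at; lia.
have f2 : F (F c) (i + 2) = rule44 (F c (i + 1)) (F c (i + 2)) (F c (i + 3))
  by apply: eca44_at; lia.
case c0: (c i); case c1: (c (i + 1)); case c2: (c (i + 2)) => //= _.
- by exists 1%N, (i + 1); rewrite /wall /= s1 e1 e2 c0 c1 c2 /rule44 andbF.
- by exists 0%N, (i + 1); rewrite /wall /= s1 c1 c2.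
- case cl: (c (i - 1)); last by exists 0%N, (i - 1); rewrite /wall /= s3 cl c0.
  case cr: (c (i + 3)); last by exists 0%N, (i + 2); rewrite /wall /= s2 c2 cr.
  exists 2%N, (i + 1); rewrite /wall /= s1 f1 f2 e0 e1 e2 cl c0 c1 c2 cr /rule44 /=.
  by case: (F c (i + 3)).
- by exists 0%N, i; rewrite /wall /= c0 c1.
- by exists 0%N, i; rewrite /wall /= c0 c1.
Qed.

Lemma not_tiled_wall c : ~ tiled c -> exists t j, wall (iter t F c) j.
Proof.
move=> Nc; apply: NNPP => Nw; apply: Nc => i; apply/negPn/negP => Ni.
by case: Nw; apply: not_tile110_wall Ni.
Qed.

Definition agree_off (l r : Z) (c d : config) :=
  forall i, i <= l + 1 \/ r <= i -> c i = d i.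

Lemma agree_off_eca l r c d : wall c l -> wall c r -> wall d l -> wall d r ->
  agree_off l r c d -> agree_off l r (F c) (F d).
Proof.
have W e j : wall e j -> F e j = false /\ F e (j + 1) = false.
  by move=> /wall_eca /andP[/negbTE -> /negbTE ->].
move=> /W[cl0 cl1] /W[cr0 cr1] /W[dl0 dl1] /W[dr0 dr1] A i hi.
have [hi'|[->|[->|[->|[->|hi']]]]] :
  i <= l - 1 \/ i = l \/ i = l + 1 \/ i = r \/ i = r + 1 \/ r + 2 <= i by lia.
- by rewrite !eca44E !A //; lia.
- by rewrite cl0 dl0.
- by rewrite cl1 dl1.
- by rewrite cr0 dr0.
- by rewrite cr1 dr1.
- by rewrite !eca44E !A //; lia.
Qed.

Lemma agree_off_iter l r c d t : wall c l -> wall c r -> wall d l -> wall d r ->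
  agree_off l r c d -> agree_off l r (iter t F c) (iter t F d).
Proof.
move=> cl cr dl dr A; elim: t => [|t IH] //=.
by apply: agree_off_eca IH; apply: wall_iter (leq0n t) _.
Qed.

Lemma has_period_walls P c j M : 0 < P -> has_period P c -> wall c j ->
  exists l r, l <= - M /\ M <= r /\ wall c l /\ wall c r.
Proof.
move=> P0 Pc w; set k := Z.abs j + Z.abs M.
have wk m : wall c (j + m * P).
  rewrite /wall; have -> : j + m * P + 1 = j + 1 + m * P by lia.
  by rewrite !Pc.
have kP : k <= k * P by nia.
by exists (j + (- k) * P), (j + k * P); split; [|split; [|split]]; rewrite ?wk; lia.
Qed.

Lemma SInv44_of_wall u T j x : u <> [::] -> wall (iter T F (periodic u)) j -> SInv 44 u x.
Proof.
move=> u0 wB; set B := periodic u; set c := patch u x; set n := Z.of_nat (size x).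
have P0 : 0 < Z.of_nat (size u) by case: (u) u0 => //= *; lia.
have PB := iter_eca_has_period 44 T (periodic_has_period u0).
have [l [r [hl [hr [Bl Br]]]]] := has_period_walls (Z.of_nat T + n + 2) P0 PB wB.
have AT : agree_off l r (iter T F c) (iter T F B).
  by move=> i hi; apply: iter_eca_patch_out; lia.
have cl : wall (iter T F c) l by rewrite /wall !AT //; lia.
have cr : wall (iter T F c) r by rewrite /wall !AT //; lia.
exists (r - l + 1) => t; exists l => i D.
case: (leqP T t) => [/subnK tT | tT].
- suff : ~ (i <= l + 1 \/ r <= i) by lia.
  move=> hi; apply: D; rewrite -tT !iterD.
  by symmetry; apply: (agree_off_iter _ cl cr Bl Br AT).
- suff : ~ (i + Z.of_nat t < 0 \/ n <= i - Z.of_nat t) by lia.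
  by move=> hi; apply: D; rewrite iter_eca_patch_out.
Qed.

Lemma tiled_front (c d : config) r :
  tiled d -> c r != d r -> (forall i, r < i -> c i = d i) ->
  F c (r + 1) != F d (r + 1) /\ forall i, r + 1 < i -> F c i = F d i.
Proof.
move=> Td cd A; split; last by move=> i ri; rewrite !eca44E !A //; lia.
have sr : r = r + 1 - 1 by lia.
have sr2 : r + 2 = r + 1 + 1 by lia.
rewrite !(eca44_at _ sr sr2) (A (r + 1)) ?(A (r + 2)); try lia.
by move: cd (Td r); case: (c r); case: (d r); case: (d (r + 1)); case: (d (r + 2)).
Qed.

Lemma tiled_front_iter (c d : config) r t :
  tiled d -> c r != d r -> (forall i, r < i -> c i = d i) ->
  iter t F c (r + Z.of_nat t) != iter t F d (r + Z.of_nat t).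
Proof.
move=> Td cd A.
suff [] : iter t F c (r + Z.of_nat t) != iter t F d (r + Z.of_nat t) /\
  forall i, r + Z.of_nat t < i -> iter t F c i = iter t F d i by [].
elim: t => [|t [IH1 IH2]]; first by rewrite Z.add_0_r.
have -> : r + Z.of_nat t.+1 = r + Z.of_nat t + 1 by lia.
exact: tiled_front (tiled_iter t Td) IH1 IH2.
Qed.

Lemma SInv44_patch_tiled u x : tiled (periodic u) -> SInv 44 u x -> tiled (patch u x).
Proof.
move=> TB [w Sw]; apply: NNPP => Nc.
have [t0 [j wc]] := not_tiled_wall Nc.
have [k ck] : exists k, patch u x k != periodic u k.
  apply: NNPP => same; apply: Nc => i.
  have cB i' : patch u x i' = periodic u i' by apply/eqP/negPn/negP => ne; apply: same; exists i'.
  by rewrite !cB; apply: TB.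
have [r [cr rr]] := Z_rightmost (P := fun i => patch u x i != periodic u i) ck
  (M := Z.of_nat (size x)) (fun i xi => ltac:(by rewrite negbK patch_out //; lia)).
pose t := (t0 + Z.to_nat (w + Z.abs j + Z.abs r + 1))%N.
have [a Ha] := Sw t.
have Hd i : iter t F (patch u x) i != iter t F (periodic u) i -> a <= i < a + w.
  by move=> ne; apply: Ha => e; rewrite e eqxx in ne.
have front := tiled_front_iter t TB cr (fun i ri => eqP (negbNE (rr i ri))).
have wct := wall_iter (leq_addr _ t0 : (t0 <= t)%N) wc.
have wBt := tiled_no_wall j (tiled_iter t TB).
have [dj|dj] : iter t F (patch u x) j != iter t F (periodic u) j \/
               iter t F (patch u x) (j + 1) != iter t F (periodic u) (j + 1).
  move: wct wBt; rewrite /wall => /andP[/negbTE -> /negbTE ->].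
  case: (iter t F (periodic u) j); first by left.
  by case: (iter t F (periodic u) (j + 1)); first right.
all: move: (Hd _ dj) (Hd _ front); rewrite /t => hj hr; clear -hj hr; lia.
Qed.



Lemma SInv44_tiledP u x :
  tiled (periodic u) -> SInv 44 u x <-> x = periodic_window u 0 (size x).
Proof.
move=> TB; rewrite -patch_eq_periodicP; split; last exact: SInv_of_patch_eq.
move=> S; apply: (tiled_eq_right (n := Z.of_nat (size x)) (SInv44_patch_tiled TB S) TB).
by move=> i xi; apply: patch_out; right.
Qed.

Local Close Scope Z_scope.

Lemma CC_le_and X Y (P : X -> Y -> Prop) (a : pred X) (b : pred Y) :
  (forall x y, P x y <-> a x && b y) -> CC_le P 2.
Proof.
move=> Pab; exists (AliceNode a (BobNode b (Leaf _ _ true) (Leaf _ _ false)) (Leaf _ _ false)).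
by split=> // x y; rewrite Pab /=; case: (a x); case: (b y).
Qed.

Lemma CC_le_total X Y (P : X -> Y -> Prop) C : (forall x y, P x y) -> CC_le P C.
Proof. by move=> PT; exists (Leaf _ _ true); split=> // x y; split. Qed.

Theorem mainTheorem13 :
  forall u : seq bool, u <> [::] ->
  exists C : nat, forall n : nat, SInv_CC_le 44%Z u n C.
Proof.
move=> u u0; exists 2 => n i _.
have [TB | NTB] := classic (tiled (periodic u)); last first.
  have [T [j wB]] := not_tiled_wall NTB.
  by apply: CC_le_total => x y; apply: SInv44_of_wall u0 wB.
apply: (CC_le_and (a := fun x : i.-tuple bool => tval x == periodic_window u 0 i)
                  (b := fun y : (n - i).-tuple bool => tval y == periodic_window u i (n - i))).
move=> x y; rewrite SInv44_tiledP // size_cat !size_tuple periodic_windowD add0n.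
by rewrite -eqseq_cat ?size_tuple ?size_mkseq //; split=> /eqP.
Qed.
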